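(* Let $M(C,\bar\xi,\pi)$ be a Myller configuration with Darboux frame $(\bar\xi,\bar\mu,\bar v)$ and invariants $G,K,T$ such that $(G(s),K(s))\neq(0,0)$ for all $s$, and let $\bar W_n$ be its unit ND-vector field. Then $C$ is a $W_n$-helix in $M$ if and only if $C$ is a $\bar\xi$-helix in $M$.
   Context: Let $C$ be a smooth curve in $E^3$ parametrized by arclength $s$; primes denote $d/ds$. A Myller configuration $M(C,\bar\xi,\pi)$ consists of a smooth unit vector field $\bar\xi(s)$ along $C$ and a smooth field of oriented planes $\pi(s)$ with $\bar\xi(s)\in\pi(s)$. Let $\bar v$ be the unit normal of $\pi$ and $\bar\mu=\bar v\times\bar\xi$. The Darboux frame satisfies $\bar\xi'=G\bar\mu+K\bar v$, $\bar\mu'=-G\bar\xi+T\bar v$, $\bar v'=-K\bar\xi-T\bar\mu$. The normal-type Darboux vector (ND-vector) is $W_n=-K\bar\mu+G\bar v$ and $\bar W_n=W_n/\|W_n\|$. $C$ is a $W_n$-helix in $M$ if $\bar W_n$ makes a constant angle with a fixed unit direction $\bar l_n$ (i.e. $\langle\bar W_n,\bar l_n\rangle$ is constant, $\bar l_n$ a constant unit vector). $C$ is a $\bar\xi$-helix in $M$ if $\langle\bar\xi,\bar d_\xi\rangle$ is constant for some constant unit vector $\bar d_\xi$. *)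

From HB Require Import structures.
From mathcomp Require Import all_boot all_order all_algebra.
From mathcomp Require Import all_classical all_reals all_analysis.
Set Implicit Arguments. Unset Strict Implicit. Unset Printing Implicit Defensive.
Import Order.TTheory GRing.Theory Num.Theory.
Import numFieldNormedType.Exports.
Local Open Scope ring_scope.

Section Myller.
Variable R : realType.
Notation vec := 'rV[R]_3.

Definition dotp (u w : vec) : R := \sum_(i < 3) u 0 i * w 0 i.

Definition co (u : vec) (k : nat) : R := u 0 (inord (k %% 3)).

Definition cross (u w : vec) : vec :=
  \row_(j < 3) (co u j.+1 * co w j.+2 - co u j.+2 * co w j.+1).

Definition smooth_on {V : normedModType R} (a b : R) (f : R -> V) : Prop :=
  forall (n : nat) (x : R), a < x < b -> derivable (derive1n n f) x 1.

(* Myller configuration M(C, xi, pi) over the parameter interval ]a,b[ :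
   C = c is parametrized by arclength, xi is a smooth unit vector field along C,
   the oriented plane field pi is given by its smooth unit normal field v,
   and xi(s) lies in pi(s), i.e. xi(s) is orthogonal to v(s). *)
Definition myller_config (a b : R) (c xi v : R -> vec) : Prop :=
  a < b /\
  smooth_on a b c /\ smooth_on a b xi /\ smooth_on a b v /\
  (forall s, a < s < b ->
     [/\ dotp (derive1 c s) (derive1 c s) = 1,
         dotp (xi s) (xi s) = 1,
         dotp (v s) (v s) = 1 &
         dotp (xi s) (v s) = 0]).

Definition frame_mu (xi v : R -> vec) : R -> vec := fun s => cross (v s) (xi s).

(* Invariants G, K, T, defined by xi' = G mu + K v, mu' = -G xi + T v,
   v' = -K xi - T mu  (i.e. G = <xi',mu>, K = <xi',v>, T = <mu',v>). *)
Definition myG (xi v : R -> vec) (s : R) : R := dotp (derive1 xi s) (frame_mu xi v s).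
Definition myK (xi v : R -> vec) (s : R) : R := dotp (derive1 xi s) (v s).
Definition myT (xi v : R -> vec) (s : R) : R :=
  dotp (derive1 (frame_mu xi v) s) (v s).

Definition ND_vector (xi v : R -> vec) (s : R) : vec :=
  - (myK xi v s) *: frame_mu xi v s + myG xi v s *: v s.
Definition unit_ND_vector (xi v : R -> vec) (s : R) : vec :=
  (Num.sqrt (dotp (ND_vector xi v s) (ND_vector xi v s)))^-1 *: ND_vector xi v s.

Definition Wn_helix (a b : R) (xi v : R -> vec) : Prop :=
  exists l : vec, dotp l l = 1 /\
    exists k : R, forall s, a < s < b -> dotp (unit_ND_vector xi v s) l = k.

Definition xi_helix (a b : R) (xi : R -> vec) : Prop :=
  exists d : vec, dotp d d = 1 /\
    exists k : R, forall s, a < s < b -> dotp (xi s) d = k.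

End Myller.

From HB Require Import structures.
From mathcomp Require Import all_boot all_order all_algebra.
From mathcomp Require Import all_classical all_reals all_analysis.
From mathcomp Require Import ring lra.
Set Implicit Arguments. Unset Strict Implicit. Unset Printing Implicit Defensive.
Import Order.TTheory GRing.Theory Num.Theory.
Import numFieldNormedType.Exports.
Local Open Scope ring_scope.

(* The unit ND-vector is S = (xi x xi')/|xi'|: indeed W_n = xi x xi' and
   |W_n|^2 = G^2 + K^2 = |xi'|^2 > 0.  So (xi, xi'/|xi'|, S) is the Sabban frame of
   the curve xi on the unit sphere, and S' = - kappa xi', where
   kappa = det(xi, xi', xi'')/|xi'|^3 is the geodesic curvature of xi.
   If xi.d is constant then xi'.d = 0, so S.d is constant.  Conversely let S.l = k.
   Then kappa (xi'.l) = 0.  If kappa vanishes identically, S is constant and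
   orthogonal to xi.  Otherwise, wherever kappa <> 0 we also get xi''.l = 0, and
   expanding xi'' and l in the frame gives xi.l = k kappa and (k kappa)^2 = 1 - k^2.
   The continuous function (k kappa)^2 takes only the values 0 and 1 - k^2, hence
   is constant; this forces xi'.l = 0 everywhere, so xi.l is constant. *)

Section CrossProduct.
Variable R : realType.
Implicit Types u w x y z : 'rV[R]_3.

Lemma ord3P (j : 'I_3) : [\/ j = inord 0, j = inord 1 | j = inord 2].
Proof.
by case: j => -[|[|[|//]]] lt_j3; [constructor 1|constructor 2|constructor 3];
  apply/val_inj; rewrite /= inordK.
Qed.

Lemma dotpE u w : dotp u w =
  u 0 (inord 0) * w 0 (inord 0) + u 0 (inord 1) * w 0 (inord 1)
  + u 0 (inord 2) * w 0 (inord 2).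
Proof.
rewrite /dotp !big_ord_recl big_ord0 addr0 addrA.
by congr (_ + _ + _); congr (u 0 _ * w 0 _); apply/val_inj; rewrite /= inordK.
Qed.

Ltac coords := rewrite ?dotpE ?mxE; try rewrite /co; rewrite ?inordK //=.

Ltac coordwise := let j := fresh "j" in apply/rowP => j; case: (ord3P j) => ->; coords.

Lemma dotpC u w : dotp u w = dotp w u.
Proof. coords; ring. Qed.

Lemma dotpDl x y z : dotp (x + y) z = dotp x z + dotp y z.
Proof. coords; ring. Qed.

Lemma dotpNl u w : dotp (- u) w = - dotp u w.
Proof. coords; ring. Qed.

Lemma dotpZl k u w : dotp (k *: u) w = k * dotp u w.
Proof. coords; ring. Qed.

Lemma dotpZr k u w : dotp u (k *: w) = k * dotp u w.
Proof. by rewrite dotpC dotpZl dotpC. Qed.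

Lemma dotp_ge0 u : 0 <= dotp u u.
Proof. coords; nra. Qed.

Lemma dotp_eq0 u : dotp u u = 0 -> u = 0.
Proof.
move=> /psumr_eq0P u2_eq0; apply/rowP => j; rewrite mxE; apply/eqP.
by rewrite -sqrf_eq0 expr2 u2_eq0 // => i _; rewrite -expr2 sqr_ge0.
Qed.

Lemma unit_dotp_eq1 u w : dotp u u = 1 -> dotp w w = 1 -> dotp u w = 1 -> u = w.
Proof.
move=> uu ww uw; apply/eqP; rewrite -subr_eq0; apply/eqP/dotp_eq0.
have -> : dotp (u - w) (u - w) = dotp u u - 2 * dotp u w + dotp w w by coords; ring.
by rewrite uu ww uw; ring.
Qed.

Lemma cross_antisym u w : cross u w = - cross w u.
Proof. coordwise; ring. Qed.

Lemma crossvv u : cross u u = 0.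
Proof. coordwise; ring. Qed.

Lemma dotp_crossl u w : dotp u (cross u w) = 0.
Proof. coords; ring. Qed.

Lemma dotp_cross_cross x y :
  dotp (cross x y) (cross x y) = dotp x x * dotp y y - dotp x y ^+ 2.
Proof. coords; ring. Qed.

Lemma gram_decomp x y z :
  dotp (cross x y) (cross x y) *: z =
    (dotp y y * dotp x z - dotp x y * dotp y z) *: x
  + (dotp x x * dotp y z - dotp x y * dotp x z) *: y
  + dotp (cross x y) z *: cross x y.
Proof. coordwise; ring. Qed.

Lemma cross_gram x y z :
  dotp (cross x y) (cross x y) *: cross x z =
    (dotp x x * dotp y z - dotp x y * dotp x z) *: cross x y
  + dotp (cross x y) z *: (dotp x y *: x - dotp x x *: y).
Proof. coordwise; ring. Qed.

End CrossProduct.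

Section VectorDerivatives.
Variable R : realType.
Implicit Types (U W : R -> 'rV[R]_3) (dU dW l : 'rV[R]_3) (s : R).

Lemma is_derive_coord m n (M : R -> 'M[R]_(m, n)) dM s i j :
  is_derive s 1 M dM -> is_derive s 1 (fun t => M t i j) (dM i j).
Proof.
move=> [dM_ex <-]; have /derivable_mxP dMij := dM_ex.
by apply: DeriveDef; [exact: dMij | rewrite derive_mx // mxE].
Qed.

Lemma is_derive_dotp U W dU dW s : is_derive s 1 U dU -> is_derive s 1 W dW ->
  is_derive s 1 (fun t => dotp (U t) (W t)) (dotp dU (W s) + dotp (U s) dW).
Proof.
move=> U' W'; rewrite /dotp -big_split /=.
have -> : (fun t => \sum_(i < 3) U t 0 i * W t 0 i) =
    \sum_(i < 3) (fun t => U t 0 i * W t 0 i) by rewrite fct_sumE.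
apply: is_derive_sum => i; apply: is_derive_eq.
  by apply: is_deriveM; exact: is_derive_coord.
by rewrite /GRing.scale /=; ring.
Qed.

Lemma is_derive_dotp_cst U dU l s : is_derive s 1 U dU ->
  is_derive s 1 (fun t => dotp (U t) l) (dotp dU l).
Proof.
move=> U'; apply: is_derive_eq (@is_derive_dotp U (fun=> l) _ _ s U' (is_derive_cst l s 1)) _.
by rewrite [dotp _ 0]dotpE !mxE !mulr0 !addr0.
Qed.

Lemma is_derive_cross U W dU dW s : is_derive s 1 U dU -> is_derive s 1 W dW ->
  is_derive s 1 (fun t => cross (U t) (W t)) (cross dU (W s) + cross (U s) dW).
Proof.
move=> U' W'.
have UW' i j : is_derive s 1 (fun t => cross (U t) (W t) i j) ((cross dU (W s) + cross (U s) dW) i j).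
  have -> : (fun t => cross (U t) (W t) i j) = fun t =>
      co (U t) j.+1 * co (W t) j.+2 - co (U t) j.+2 * co (W t) j.+1.
    by apply/funext => t; rewrite mxE.
  apply: is_derive_eq.
    by apply: is_deriveB; apply: is_deriveM; exact: is_derive_coord.
  by rewrite !mxE /co /GRing.scale /=; ring.
have UW_ex : derivable (fun t => cross (U t) (W t)) s 1.
  by apply/derivable_mxP => i j; case: (UW' i j).
apply: DeriveDef => //; rewrite derive_mx //; apply/matrixP => i j; rewrite [LHS]mxE.
by case: (UW' i j) => _ ->.
Qed.

End VectorDerivatives.

Section OpenInterval.
Variables (R : realType) (a b : R).
Implicit Types (F : R -> R) (s t : R).

Lemma itvoo_between s1 s2 : a < s1 < b -> a < s2 < b ->
  forall t, s1 <= t <= s2 -> a < t < b.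
Proof.
move=> /andP[a_s1 _] /andP[_ s2_b] t /andP[s1_t t_s2].
by rewrite (lt_le_trans a_s1 s1_t) (le_lt_trans t_s2 s2_b).
Qed.

Lemma mid_itvoo : a < b -> a < (a + b) / 2 < b.
Proof. by move=> lt_ab; rewrite !(midf_lt lt_ab). Qed.

Lemma is_derive_cst_itvoo F k s dF : (forall t, a < t < b -> F t = k) ->
  a < s < b -> is_derive s 1 F dF -> dF = 0.
Proof.
move=> Fk Is [_ <-].
have Fk_near : \forall t \near s, cst k t = F t.
  have : s \in `]a, b[ by rewrite in_itv.
  move/near_in_itvoo; apply: filterS => t; rewrite in_itv /= => It.
  exact/esym/Fk.
by case: (near_eq_is_derive Fk_near (is_derive_cst k s 1)).
Qed.

Lemma derive0_cst_itvoo F s1 s2 : (forall t, a < t < b -> is_derive t 1 F 0) ->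
  a < s1 < b -> a < s2 < b -> F s1 = F s2.
Proof.
move=> F'0; wlog le12 : s1 s2 / s1 <= s2.
  by move=> H I1 I2; case: (leP s1 s2) => [/H|/ltW/H ->] //; exact.
move=> I1 I2; have between := itvoo_between I1 I2.
have [| |t _] := @MVT_segment R F (fun=> 0) s1 s2 le12.
- move=> t; rewrite in_itv /= => /andP[s1t ts2]; apply/F'0/between.
  by rewrite !ltW.
- apply: derivable_within_continuous => t; rewrite in_itv /= => /between It.
  by case: (F'0 t It).
- by rewrite mul0r => /eqP; rewrite subr_eq0 => /eqP.
Qed.

(* If both values occur, the IVT makes F take the value c/2, which forces c = 0. *)
Lemma continuous_two_valued_cst F c s1 s2 :
  {within `]a, b[, continuous F}%classic ->
  (forall t, a < t < b -> F t = 0 \/ F t = c) ->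
  a < s1 < b -> a < s2 < b -> F s1 = F s2.
Proof.
move=> F_cont F01; wlog le12 : s1 s2 / s1 <= s2.
  by move=> H I1 I2; case: (leP s1 s2) => [/H|/ltW/H ->] //; exact.
move=> I1 I2.
have F_cont12 : {within `[s1, s2], continuous F}%classic.
  apply: continuous_subspaceW F_cont => t /=; rewrite !in_itv /=.
  exact: itvoo_between I1 I2 t.
have half_between (x y : R) : Num.min x y <= (x + y) / 2 <= Num.max x y.
  by case: (ltP x y) => xy; apply/andP; split; lra.
have [t + Ft] := IVT le12 F_cont12 (half_between (F s1) (F s2)).
rewrite in_itv /= => /(itvoo_between I1 I2) /F01; rewrite Ft.
by case: (F01 s1 I1) => ->; case: (F01 s2 I2) => ->;
  rewrite ?add0r ?addr0; case=> half; lra.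
Qed.

Lemma is_derive_smooth (V : normedModType R) (f : R -> V) n s :
  smooth_on a b f -> a < s < b -> is_derive s 1 (derive1n n f) (derive1n n.+1 f s).
Proof.
move=> f_smooth Is; rewrite derive1nS derive1E.
by apply: derivableP; exact: f_smooth n s Is.
Qed.

Lemma unit_dotp_derive (U : R -> 'rV[R]_3) dU s :
  (forall t, a < t < b -> dotp (U t) (U t) = 1) -> a < s < b ->
  is_derive s 1 U dU -> dotp (U s) dU = 0.
Proof.
move=> U1 Is U'; have := is_derive_cst_itvoo U1 Is (is_derive_dotp U' U').
by rewrite dotpC => UU'; lra.
Qed.

End OpenInterval.

Section DarbouxFrame.
Variable R : realType.
Implicit Types x v y : 'rV[R]_3.

Lemma cross_darboux x v y :
  dotp x x = 1 -> dotp v v = 1 -> dotp x v = 0 -> dotp x y = 0 ->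
  - dotp y v *: cross v x + dotp y (cross v x) *: v = cross x y.
Proof.
move=> xx vv xv xy; have := cross_gram x v y.
rewrite dotp_cross_cross xx vv xv xy expr0n /= subr0 !mul1r !mul0r subr0 scale0r add0r.
rewrite scale1r (cross_antisym x v) dotpNl (dotpC (cross v x)) => ->.
by rewrite scale1r !scalerN !scaleNr opprK (dotpC v y).
Qed.

Lemma dotp_darboux x v y :
  dotp x x = 1 -> dotp v v = 1 -> dotp x v = 0 -> dotp x y = 0 ->
  dotp y y = dotp y (cross v x) ^+ 2 + dotp y v ^+ 2.
Proof.
move=> xx vv xv xy; have := congr1 (fun w => dotp w y) (gram_decomp x v y).
rewrite /= dotp_cross_cross xx vv xv xy !dotpDl !dotpZl (cross_antisym x v) dotpNl.
by rewrite !(dotpC _ y); lra.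
Qed.

End DarbouxFrame.

(* Together with xi and xi'/|xi'| it forms the Sabban frame of the spherical curve xi. *)
Definition sabban_normal (R : realType) (xi : R -> 'rV[R]_3) (s : R) : 'rV[R]_3 :=
  (Num.sqrt (dotp (derive1 xi s) (derive1 xi s)))^-1 *: cross (xi s) (derive1 xi s).

(* [Wn_helix a b xi v] and [xi_helix a b xi] unfold to
   [constant_angle a b (unit_ND_vector xi v)] and [constant_angle a b xi]. *)
Definition constant_angle (R : realType) (a b : R) (f : R -> 'rV[R]_3) : Prop :=
  exists l, dotp l l = 1 /\ exists k, forall s, a < s < b -> dotp (f s) l = k.

Lemma constant_angle_eq (R : realType) (a b : R) (f g : R -> 'rV[R]_3) :
  (forall s, a < s < b -> f s = g s) -> constant_angle a b f <-> constant_angle a b g.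
Proof.
move=> fg; split=> -[l [l1 [k fl]]]; exists l; split=> //; exists k => s Is.
  by rewrite -fg // fl.
by rewrite fg // fl.
Qed.

Section SabbanFrame.
Variables (R : realType) (a b : R) (xi : R -> 'rV[R]_3).
Hypothesis lt_ab : a < b.
Hypothesis xi_smooth : smooth_on a b xi.
Hypothesis xi_unit : forall s, a < s < b -> dotp (xi s) (xi s) = 1.
Hypothesis xi'_gt0 : forall s, a < s < b -> 0 < dotp (derive1 xi s) (derive1 xi s).

Local Notation xi' := (derive1 xi).
Local Notation xi'' := (derive1 (derive1 xi)).
Local Notation S := (sabban_normal xi).
Local Notation speed s := (Num.sqrt (dotp (xi' s) (xi' s))).
Local Notation det s := (dotp (cross (xi s) (xi' s)) (xi'' s)).
(* the geodesic curvature of xi on the unit sphere *)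
Local Notation kappa s := (det s / speed s ^+ 3).
Local Notation mid := ((a + b) / 2).

Let mid_in : a < mid < b. Proof. exact: mid_itvoo. Qed.

Lemma is_derive_xi s : a < s < b -> is_derive s 1 xi (xi' s).
Proof. by move/(is_derive_smooth 0 xi_smooth); rewrite !derive1nS derive1n0. Qed.

Lemma is_derive_xi' s : a < s < b -> is_derive s 1 xi' (xi'' s).
Proof. by move/(is_derive_smooth 1 xi_smooth); rewrite !derive1nS derive1n0. Qed.

Lemma is_derive_xi'' s : a < s < b -> is_derive s 1 xi'' (derive1 xi'' s).
Proof. by move/(is_derive_smooth 2 xi_smooth); rewrite !derive1nS derive1n0. Qed.

Lemma dotp_xi_xi' s : a < s < b -> dotp (xi s) (xi' s) = 0.
Proof. by move=> Is; exact: unit_dotp_derive xi_unit Is (is_derive_xi Is). Qed.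

Lemma speed_neq0 s : a < s < b -> speed s != 0.
Proof. by move=> Is; rewrite gt_eqF // sqrtr_gt0 xi'_gt0. Qed.

Lemma sqr_speed s : speed s ^+ 2 = dotp (xi' s) (xi' s).
Proof. by rewrite sqr_sqrtr // dotp_ge0. Qed.

Lemma dotp_xi_xi'' s : a < s < b -> dotp (xi s) (xi'' s) = - speed s ^+ 2.
Proof.
move=> Is; have := is_derive_cst_itvoo dotp_xi_xi' Is
  (is_derive_dotp (is_derive_xi Is) (is_derive_xi' Is)).
by rewrite sqr_speed => /eqP; rewrite addrC addr_eq0 => /eqP.
Qed.

Lemma dotp_cross_xi' s : a < s < b ->
  dotp (cross (xi s) (xi' s)) (cross (xi s) (xi' s)) = speed s ^+ 2.
Proof.
by move=> Is; rewrite dotp_cross_cross xi_unit // dotp_xi_xi' // expr0n subr0 mul1r sqr_speed.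
Qed.

Lemma dotp_cross_sabban s l : a < s < b ->
  dotp (cross (xi s) (xi' s)) l = speed s * dotp (S s) l.
Proof.
by move=> Is; rewrite dotpZl mulrA divff ?mul1r // speed_neq0.
Qed.

Lemma dotp_sabban s : a < s < b -> dotp (S s) (S s) = 1.
Proof.
move=> Is; rewrite /sabban_normal dotpZl dotpZr dotp_cross_xi' //.
by field; exact: speed_neq0.
Qed.

Lemma dotp_xi_sabban s : dotp (xi s) (S s) = 0.
Proof. by rewrite dotpZr dotp_crossl mulr0. Qed.

Lemma sabban_parseval s z l : a < s < b ->
  dotp z l = dotp (xi s) z * dotp (xi s) l
    + dotp (xi' s) z * dotp (xi' s) l / speed s ^+ 2 + dotp (S s) z * dotp (S s) l.
Proof.
move=> Is; have E := congr1 (fun w => dotp w l) (gram_decomp (xi s) (xi' s) z).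
rewrite /= -sqr_speed dotp_cross_xi' // xi_unit // dotp_xi_xi' // in E.
rewrite !(dotpDl, dotpZl) !dotp_cross_sabban // in E.
have N_neq0 := speed_neq0 Is.
by rewrite -[dotp z l](mulKf (expf_neq0 2 N_neq0)) E; field.
Qed.

Lemma dotp_cross_xi'' s l : a < s < b ->
  speed s ^+ 2 * dotp (cross (xi s) (xi'' s)) l =
  dotp (xi' s) (xi'' s) * dotp (cross (xi s) (xi' s)) l - det s * dotp (xi' s) l.
Proof.
move=> Is; have E := congr1 (fun w => dotp w l) (cross_gram (xi s) (xi' s) (xi'' s)).
rewrite /= dotp_cross_xi' // xi_unit // dotp_xi_xi' // !(dotpDl, dotpNl, dotpZl) in E.
by rewrite E; ring.
Qed.

Lemma is_derive_speed s : a < s < b ->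
  is_derive s 1 (fun t => speed t) (dotp (xi' s) (xi'' s) / speed s).
Proof.
move=> Is; have xi'2 := is_derive_dotp (is_derive_xi' Is) (is_derive_xi' Is).
apply: is_derive_eq (is_derive1_comp (is_derive1_sqrt (xi'_gt0 Is)) xi'2) _.
rewrite (dotpC (xi'' s)).
by field; exact: speed_neq0.
Qed.

Lemma is_derive_sabban s l : a < s < b ->
  is_derive s 1 (fun t => dotp (S t) l) (- kappa s * dotp (xi' s) l).
Proof.
move=> Is; have N_neq0 := speed_neq0 Is.
have -> : (fun t => dotp (S t) l) =
    fun t => (speed t)^-1 * dotp (cross (xi t) (xi' t)) l.
  by apply/funext => t; rewrite dotpZl.
apply: is_derive_eq (is_deriveM (is_deriveV (f := fun t => speed t) N_neq0 (is_derive_speed Is))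
  (is_derive_dotp_cst l (is_derive_cross (is_derive_xi Is) (is_derive_xi' Is)))) _.
rewrite crossvv add0r /GRing.scale /=.
rewrite -[dotp (cross _ (xi'' s)) l](mulKf (expf_neq0 2 N_neq0)) dotp_cross_xi'' //.
by field.
Qed.

Lemma derivable_kappa s : a < s < b -> derivable (fun t => kappa t) s 1.
Proof.
move=> Is; have det' := is_derive_dotp
  (is_derive_cross (is_derive_xi Is) (is_derive_xi' Is)) (is_derive_xi'' Is).
have speed3' := is_deriveX 3 (is_derive_speed Is).
have speed3_neq0 : ((fun t => speed t) ^+ 3) s != 0 := expf_neq0 3 (speed_neq0 Is).
by case: (is_deriveM det' (is_deriveV speed3_neq0 speed3')).
Qed.

Lemma xi_helix_sabban : xi_helix a b xi -> constant_angle a b S.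
Proof.
case=> d [d_unit [k xi_d]]; exists d; split=> //; exists (dotp (S mid) d) => s Is.
apply: (derive0_cst_itvoo (F := fun t => dotp (S t) d)) Is mid_in => t It.
have xi'_d := is_derive_cst_itvoo xi_d It (is_derive_dotp_cst d (is_derive_xi It)).
by apply: is_derive_eq (is_derive_sabban d It) _; rewrite xi'_d mulr0.
Qed.

Lemma kappa_eq0_xi_helix : (forall t, a < t < b -> kappa t = 0) -> xi_helix a b xi.
Proof.
move=> kappa0; have S_mid t : a < t < b -> S t = S mid.
  move=> It; apply: unit_dotp_eq1 (dotp_sabban It) (dotp_sabban mid_in) _.
  rewrite -[RHS](dotp_sabban mid_in).
  apply: (derive0_cst_itvoo (F := fun t => dotp (S t) (S mid))) It mid_in => u Iu.
  by apply: is_derive_eq (is_derive_sabban _ Iu) _; rewrite kappa0 // oppr0 mul0r.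
exists (S mid); split; first exact: dotp_sabban mid_in.
by exists 0 => t It; rewrite -(S_mid t It) dotp_xi_sabban.
Qed.

Section ConstantAngle.
Variables (l : 'rV[R]_3) (k : R).
Hypothesis l_unit : dotp l l = 1.
Hypothesis sabban_l : forall t, a < t < b -> dotp (S t) l = k.

Lemma kappa_dotp_xi'_eq0 t : a < t < b -> kappa t * dotp (xi' t) l = 0.
Proof.
move=> It; have := is_derive_cst_itvoo sabban_l It (is_derive_sabban l It).
by rewrite mulNr => /eqP; rewrite oppr_eq0 => /eqP.
Qed.

Lemma dotp_xi'_l_eq0 t : a < t < b -> kappa t != 0 -> dotp (xi' t) l = 0.
Proof.
move=> It kappa_neq0; move/eqP: (kappa_dotp_xi'_eq0 It).
by rewrite mulf_eq0 (negbTE kappa_neq0) => /eqP.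
Qed.

Lemma sabban_parseval_l t : a < t < b ->
  dotp (xi t) l ^+ 2 + dotp (xi' t) l ^+ 2 / speed t ^+ 2 = 1 - k ^+ 2.
Proof. by move=> It; move: (sabban_parseval l l It); rewrite l_unit sabban_l //; lra. Qed.

Lemma dotp_xi_l t : a < t < b -> kappa t != 0 -> dotp (xi t) l = k * kappa t.
Proof.
move=> It kappa_neq0; have N_neq0 := speed_neq0 It.
have xi'_l := dotp_xi'_l_eq0 It kappa_neq0.
have xi''_l : dotp (xi'' t) l = 0.
  have := is_derive_cst_itvoo kappa_dotp_xi'_eq0 It (is_deriveM
    (derivableP (derivable_kappa It)) (is_derive_dotp_cst l (is_derive_xi' It))).
  rewrite /GRing.scale /= xi'_l mul0r addr0 => /eqP.
  by rewrite mulf_eq0 (negbTE kappa_neq0) => /eqP.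
have S_xi'' : dotp (S t) (xi'' t) = det t / speed t.
  by rewrite dotp_cross_sabban //; field.
have := sabban_parseval (xi'' t) l It.
rewrite xi''_l xi'_l sabban_l // S_xi'' dotp_xi_xi'' // mulr0 mul0r addr0 => E.
apply: (mulfI (expf_neq0 2 N_neq0)); rewrite (_ : _ * dotp _ l = det t / speed t * k).
  by field.
lra.
Qed.

Lemma sqr_k_kappa t : a < t < b -> kappa t != 0 -> (k * kappa t) ^+ 2 = 1 - k ^+ 2.
Proof.
move=> It kappa_neq0; rewrite -(sabban_parseval_l It) -dotp_xi_l //.
by rewrite dotp_xi'_l_eq0 // expr0n /= mul0r addr0.
Qed.

(* (k kappa)^2 is constant; at a zero of kappa this forces 1 - k^2 = 0, and then
   Parseval leaves no room for xi'.l. *)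
Lemma dotp_xi'_l_eq0_itv : (exists2 t0, a < t0 < b & kappa t0 != 0) ->
  forall t, a < t < b -> dotp (xi' t) l = 0.
Proof.
case=> t0 It0 kappa0_neq0 t It.
have [kappa_neq0|/negPn/eqP kappa0] := boolP (kappa t != 0).
  exact: dotp_xi'_l_eq0.
have psi_cont : {within `]a, b[, continuous (fun t => (k * kappa t) ^+ 2)}%classic.
  apply: derivable_within_continuous => u; rewrite in_itv /= => Iu.
  by case: (is_deriveX 2 (is_deriveM (is_derive_cst k u 1) (derivableP (derivable_kappa Iu)))).
have psi01 u : a < u < b -> (k * kappa u) ^+ 2 = 0 \/ (k * kappa u) ^+ 2 = 1 - k ^+ 2.
  move=> Iu; have [->|kappa_neq0] := eqVneq (kappa u) 0.
    by left; rewrite mulr0 expr0n.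
  by right; exact: sqr_k_kappa.
have k2 : 1 - k ^+ 2 = 0.
  rewrite -(sqr_k_kappa It0 kappa0_neq0).
  by rewrite -(continuous_two_valued_cst psi_cont psi01 It It0) kappa0 mulr0 expr0n.
have := sabban_parseval_l It; rewrite k2 => /eqP.
rewrite paddr_eq0 ?divr_ge0 ?sqr_ge0 // => /andP[_ /eqP].
move/(congr1 (fun y => y * speed t ^+ 2)); rewrite mul0r divfK ?expf_neq0 ?speed_neq0 //.
by move/eqP; rewrite sqrf_eq0 => /eqP.
Qed.

Lemma sabban_angle_xi_helix : xi_helix a b xi.
Proof.
have [kappa_neq0|kappa0] := pselect (exists2 t0, a < t0 < b & kappa t0 != 0).
  exists l; split=> //; exists (dotp (xi mid) l) => t It.
  apply: (derive0_cst_itvoo (F := fun t => dotp (xi t) l)) It mid_in => u Iu.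
  apply: is_derive_eq (is_derive_dotp_cst l (is_derive_xi Iu)) _.
  exact: dotp_xi'_l_eq0_itv.
apply: kappa_eq0_xi_helix => t It; apply/eqP/negPn/negP => kappa_neq0.
by apply: kappa0; exists t.
Qed.

End ConstantAngle.

Lemma sabban_helixP : constant_angle a b S <-> xi_helix a b xi.
Proof.
split; last exact: xi_helix_sabban.
by case=> l [l_unit [k sabban_l]]; exact: sabban_angle_xi_helix l_unit sabban_l.
Qed.

End SabbanFrame.

Section MyllerConfiguration.
Variables (R : realType) (a b : R) (c xi v : R -> 'rV[R]_3).
Hypothesis cfg : myller_config a b c xi v.

Local Notation xi' := (derive1 xi).

Lemma myller_xi_unit s : a < s < b -> dotp (xi s) (xi s) = 1.
Proof. by case: cfg => _ [_ [_ [_ frame]]] Is; case: (frame s Is). Qed.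

Lemma myller_frame s : a < s < b ->
  [/\ dotp (xi s) (xi s) = 1, dotp (v s) (v s) = 1, dotp (xi s) (v s) = 0
    & dotp (xi s) (xi' s) = 0].
Proof.
case: cfg => _ [_ [xi_smooth [_ frame]]] Is; have [_ xx vv xv] := frame s Is.
have := is_derive_smooth 0 xi_smooth Is; rewrite derive1n0 derive1n1 => xi_der.
by split=> //; exact: unit_dotp_derive myller_xi_unit Is xi_der.
Qed.

Lemma ND_vector_cross s : a < s < b -> ND_vector xi v s = cross (xi s) (xi' s).
Proof. by move=> Is; case: (myller_frame Is); exact: cross_darboux. Qed.

Lemma dotp_derive_GK s : a < s < b ->
  dotp (xi' s) (xi' s) = myG xi v s ^+ 2 + myK xi v s ^+ 2.
Proof. by move=> Is; case: (myller_frame Is); exact: dotp_darboux. Qed.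

Lemma unit_ND_vector_sabban s : a < s < b -> unit_ND_vector xi v s = sabban_normal xi s.
Proof.
move=> Is; have [xx _ _ xxi'] := myller_frame Is.
by rewrite /unit_ND_vector ND_vector_cross // dotp_cross_cross xx xxi' expr0n subr0 mul1r.
Qed.

Lemma myller_derive_gt0 : (forall s, a < s < b -> (myG xi v s, myK xi v s) != (0, 0)) ->
  forall s, a < s < b -> 0 < dotp (xi' s) (xi' s).
Proof.
move=> GK_neq0 s Is; rewrite dotp_derive_GK // lt0r addr_ge0 ?sqr_ge0 // andbT.
rewrite paddr_eq0 ?sqr_ge0 // !sqrf_eq0; move: (GK_neq0 s Is); apply: contra.
by case/andP => /eqP-> /eqP->.
Qed.

End MyllerConfiguration.

Theorem theorem13 (R : realType) (a b : R) (c xi v : R -> 'rV[R]_3) :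
  myller_config a b c xi v ->
  (forall s, a < s < b -> (myG xi v s, myK xi v s) != (0, 0)) ->
  (Wn_helix a b xi v <-> xi_helix a b xi).
Proof.
move=> cfg GK_neq0; have [lt_ab [_ [xi_smooth _]]] := cfg.
apply: iff_trans (constant_angle_eq (unit_ND_vector_sabban cfg)) _.
exact: sabban_helixP lt_ab xi_smooth (myller_xi_unit cfg) (myller_derive_gt0 cfg GK_neq0).
Qed.
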